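(* Let $M$ be a graded $R$-module and let $K$, $N$ and $\{K_i\mid i\in I\}$ be graded submodules of $M$. Then: (1) $qp\text{-}V_M^g(0)=qp.Spec_g(M)$ and $qp\text{-}V_M^g(M)=\emptyset$. (2) $\bigcap_{i\in I}qp\text{-}V_M^g(K_i)=qp\text{-}V_M^g\big((\sum_{i\in I}(K_i:_RM))M\big)$. (3) $qp\text{-}V_M^g(N)\cup qp\text{-}V_M^g(K)=qp\text{-}V_M^g(N\cap K)$.
   Context: $G$ is a group with identity $e$, $R=\bigoplus_{g\in G}R_g$ is a $G$-graded commutative ring with identity, $h(R)=\bigcup_{g\in G}R_g$, and $M$ is a graded unital $R$-module with set of homogeneous elements $h(M)$. For a graded ideal $I$ of $R$, $Gr(I)$ is the set of $r=\sum_g r_g\in R$ such that for each $g$ some power $r_g^{n_g}$ lies in $I$; it equals the intersection of all graded prime ideals of $R$ containing $I$. For a submodule $K$ of $M$, $(K:_RM)=\{r\in R: rM\subseteq K\}$. A graded prime submodule of $M$ is a proper graded submodule $P$ such that $r\in h(R)$, $m\in h(M)$, $rm\in P$ imply $m\in P$ or $r\in (P:_RM)$. For a graded submodule $K$, $Gr_M(K)$ is the intersection of all graded prime submodules of $M$ containing $K$ ($Gr_M(K)=M$ if there is none). A graded submodule $K$ satisfies the graded primeful property if for each graded prime ideal $p$ of $R$ with $(K:_RM)\subseteq p$ there is a graded prime submodule $P\supseteq K$ with $(P:_RM)=p$. A graded quasi-primary submodule of $M$ is a proper graded submodule $Q$ such that whenever $r\in h(R)$, $m\in h(M)$, $rm\in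 Q$, then $r\in Gr((Q:_RM))$ or $m\in Gr_M(Q)$. $qp.Spec_g(M)$ denotes the set of all graded quasi-primary submodules of $M$ satisfying the graded primeful property. For a graded submodule $K$ of $M$, $qp\text{-}V_M^g(K)=\{Q\in qp.Spec_g(M)\mid Gr((Q:_RM))\supseteq Gr((K:_RM))\}$. *)

From HB Require Import structures.
From mathcomp Require Import all_boot all_order all_algebra.
From Stdlib Require List.
Set Implicit Arguments. Unset Strict Implicit. Unset Printing Implicit Defensive.
Import GRing.Theory.
Local Open Scope ring_scope.

Record Grp := MkGrp {
  gcar :> Type;
  gmul : gcar -> gcar -> gcar;
  gone : gcar;
  ginv : gcar -> gcar;
  gmulA : forall x y z, gmul x (gmul y z) = gmul (gmul x y) z;
  gmul1 : forall x, gmul gone x = x;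
  gmulV : forall x, gmul (ginv x) x = gone
}.

Section Graded.
Variable G : Grp.

Definition hdecomp (V : zmodType) (D : G -> V -> Prop) (x : V)
    (l : seq (G * V)) : Prop :=
  List.NoDup (map fst l) /\ (forall p, List.In p l -> D p.1 p.2) /\
  x = \sum_(p <- l) p.2.

Definition direct_sum_grading (V : zmodType) (D : G -> V -> Prop) : Prop :=
  (forall g, D g 0 /\ forall x y, D g x -> D g y -> D g (x - y)) /\
  (forall x, exists l, hdecomp D x l) /\
  (forall l : seq (G * V), List.NoDup (map fst l) ->
     (forall p, List.In p l -> D p.1 p.2) -> \sum_(p <- l) p.2 = 0 ->
     forall p, List.In p l -> p.2 = 0).

Definition graded_ring (R : comPzRingType) (Rg : G -> R -> Prop) : Prop :=
  direct_sum_grading Rg /\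
  forall g h a b, Rg g a -> Rg h b -> Rg (gmul g h) (a * b).

Definition graded_module (R : comPzRingType) (M : lmodType R)
    (Rg : G -> R -> Prop) (Mg : G -> M -> Prop) : Prop :=
  direct_sum_grading Mg /\
  forall g h r m, Rg g r -> Mg h m -> Mg (gmul g h) (r *: m).

Variables (R : comPzRingType) (M : lmodType R).
Variables (Rg : G -> R -> Prop) (Mg : G -> M -> Prop).

Definition homR (r : R) : Prop := exists g, Rg g r.
Definition homM (m : M) : Prop := exists g, Mg g m.

Definition is_ideal (I : R -> Prop) : Prop :=
  I 0 /\ (forall x y, I x -> I y -> I (x + y)) /\ (forall r x, I x -> I (r * x)).
Definition graded_ideal (I : R -> Prop) : Prop :=
  is_ideal I /\ forall x, I x -> exists l, hdecomp Rg x l /\ forall p, List.In p l -> I p.2.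
Definition graded_prime_ideal (p : R -> Prop) : Prop :=
  graded_ideal p /\ ~ p 1 /\
  forall a b, homR a -> homR b -> p (a * b) -> p a \/ p b.

Definition is_submod (N : M -> Prop) : Prop :=
  N 0 /\ (forall x y, N x -> N y -> N (x + y)) /\ (forall r x, N x -> N (r *: x)).
Definition graded_submod (N : M -> Prop) : Prop :=
  is_submod N /\ forall x, N x -> exists l, hdecomp Mg x l /\ forall p, List.In p l -> N p.2.
Definition proper_sub (N : M -> Prop) : Prop := exists m, ~ N m.

Definition colon (K : M -> Prop) : R -> Prop := fun r => forall m, K (r *: m).

Definition Gr (I : R -> Prop) : R -> Prop := fun r =>
  exists l, hdecomp Rg r l /\ forall p, List.In p l -> exists n : nat, I (p.2 ^+ n).

Definition graded_prime_submod (P : M -> Prop) : Prop :=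
  graded_submod P /\ proper_sub P /\
  forall r m, homR r -> homM m -> P (r *: m) -> P m \/ colon P r.

(* Gr_M(K): intersection of all graded prime submodules containing K
   (= M when there is none). *)
Definition GrM (K : M -> Prop) : M -> Prop := fun m =>
  forall P, graded_prime_submod P -> (forall x, K x -> P x) -> P m.

Definition graded_primeful (K : M -> Prop) : Prop :=
  forall p, graded_prime_ideal p -> (forall r, colon K r -> p r) ->
  exists P, graded_prime_submod P /\ (forall x, K x -> P x) /\
            (forall r, colon P r <-> p r).

Definition graded_quasi_primary (Q : M -> Prop) : Prop :=
  graded_submod Q /\ proper_sub Q /\
  forall r m, homR r -> homM m -> Q (r *: m) -> Gr (colon Q) r \/ GrM Q m.

Definition qpSpec (Q : M -> Prop) : Prop :=
  graded_quasi_primary Q /\ graded_primeful Q.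

Definition qpV (K : M -> Prop) (Q : M -> Prop) : Prop :=
  qpSpec Q /\ forall r, Gr (colon K) r -> Gr (colon Q) r.

Definition ideal_sum (I : Type) (J : I -> R -> Prop) : R -> Prop := fun r =>
  exists l : seq (I * R), (forall p, List.In p l -> J p.1 p.2) /\ r = \sum_(p <- l) p.2.

Definition ideal_mul_mod (J : R -> Prop) : M -> Prop := fun m =>
  exists l : seq (R * M), (forall p, List.In p l -> J p.1) /\ m = \sum_(p <- l) p.1 *: p.2.

End Graded.

(* Everything is decided on homogeneous elements: Gr(I) is contained in Gr(J)
   iff every homogeneous element with a power in I has a power in J.  Let
   Q be in qp.Spec_g(M) and let c be homogeneous with no power in (Q :_R M).
   A graded Krull argument (Zorn) gives a graded prime p containing (Q :_R M)
   and avoiding c, and the primeful property realises p as (P :_R M) for a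
   graded prime submodule P containing Q, hence containing Gr_M(Q).
   For (2), such a p contains every (K_i :_R M), hence ((sum_i (K_i :_R M))M :_R M),
   so c has no power in the latter.  For (3), quasi-primariness read inside
   these P shows that the homogeneous part of Gr((Q :_R M)) is prime: if
   (ab)^k is in (Q :_R M) but no power of a is, then b^k lies in every such
   (P :_R M), so some power of b lies in (Q :_R M). *)

From mathcomp Require Import all_boot all_order all_algebra.
From mathcomp Require Import boolp classical_sets ring.
From Stdlib Require List.
Set Implicit Arguments. Unset Strict Implicit. Unset Printing Implicit Defensive.
Import GRing.Theory.
Local Open Scope ring_scope.
Local Open Scope classical_set_scope.

Section GroupFacts.
Variable G : Grp.

Lemma gmulgV (x : G) : gmul x (ginv x) = gone G.
Proof.
have e : gmul (ginv (ginv x)) (ginv x) = gone G by exact: gmulV.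
by rewrite -[LHS]gmul1 -{1}e -gmulA (gmulA (ginv x) x) gmulV gmul1.
Qed.

Lemma gmulg1 (x : G) : gmul x (gone G) = x.
Proof. by rewrite -(gmulV x) gmulA gmulgV gmul1. Qed.

Lemma gmulIg (h : G) : injective (fun g : G => gmul g h).
Proof.
move=> g g' e; rewrite -[g]gmulg1 -[g']gmulg1 -(gmulgV h) !gmulA.
by congr gmul.
Qed.

End GroupFacts.

Lemma big_ind_In (R T : Type) (K : R -> Prop) (idx : R) (op : R -> R -> R)
    (r : seq T) (P : pred T) (F : T -> R) :
  K idx -> (forall x y, K x -> K y -> K (op x y)) ->
  (forall i, List.In i r -> P i -> K (F i)) -> K (\big[op/idx]_(i <- r | P i) F i).
Proof.
move=> K0 Kop; elim: r => [|i r IHr] KF; first by rewrite big_nil.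
rewrite big_cons; have Kr : K (\big[op/idx]_(j <- r | P j) F j).
  by apply: IHr => j jr; apply: KF; right.
by case: ifP => // Pi; apply: Kop => //; apply: KF => //; left.
Qed.

Lemma NoDup_map_filter (A B : Type) (f : A -> B) (P : pred A) (s : seq A) :
  List.NoDup (map f s) -> List.NoDup (map f (filter P s)).
Proof.
elim: s => //= x s IHs /List.NoDup_cons_iff [fx_notin nd].
case: (P x) => /=; last exact: IHs.
constructor; last exact: IHs.
move=> /List.in_map_iff [y [fy /List.filter_In [ys _]]]; apply: fx_notin.
by rewrite -fy; apply: List.in_map.
Qed.

Lemma hdecomp1 (G : Grp) (V : zmodType) (D : G -> V -> Prop) g v :
  D g v -> hdecomp D v [:: (g, v)].
Proof.
move=> Dv; split; first by constructor; [|constructor].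
by split; [move=> p [<-|[]] | rewrite big_seq1].
Qed.

Section DirectSum.
Variables (G : Grp) (V : zmodType) (D : G -> V -> Prop).
Hypothesis HD : direct_sum_grading D.

Lemma dsum0 g : D g 0. Proof. by case: HD => /(_ g) []. Qed.

Lemma dsumB g x y : D g x -> D g y -> D g (x - y).
Proof. by case: HD => /(_ g) [_ DB] _; apply: DB. Qed.

Lemma dsumN g x : D g x -> D g (- x).
Proof. by move=> Dx; rewrite -sub0r; apply: dsumB => //; apply: dsum0. Qed.

Lemma dsumD g x y : D g x -> D g y -> D g (x + y).
Proof. by move=> Dx Dy; rewrite -[y]opprK; apply: dsumB => //; apply: dsumN. Qed.

Lemma hdecomp_ex x : exists l, hdecomp D x l.
Proof. by case: HD => _ []. Qed.

Definition graded_part (l : seq (G * V)) (g : G) : V :=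
  \sum_(p <- l | `[< p.1 = g >]) p.2.

Lemma graded_part_cons h v l g :
  graded_part ((h, v) :: l) g = (if `[< h = g >] then v else 0) + graded_part l g.
Proof. by rewrite /graded_part big_cons /=; case: ifP; rewrite ?add0r. Qed.

Lemma graded_part_homogeneous l g :
  (forall p, List.In p l -> D p.1 p.2) -> D g (graded_part l g).
Proof.
move=> Dl; apply: big_ind_In => [|x y|p pl /asboolP <-];
  [exact: dsum0 | exact: dsumD | exact: Dl].
Qed.

Lemma graded_part_notin l g : ~ List.In g (map fst l) -> graded_part l g = 0.
Proof.
move=> gl; apply: (big_ind_In (K := eq^~ 0)) => [//|x y -> ->|p pl /asboolP pg].
  by rewrite addr0.
by case: gl; rewrite -pg; apply: List.in_map.
Qed.

Lemma graded_part_NoDup l g v :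
  List.NoDup (map fst l) -> List.In (g, v) l -> graded_part l g = v.
Proof.
elim: l => [|[h w] l IHl] //= /List.NoDup_cons_iff [hl nd] [[<- <-]|gvl].
  by rewrite graded_part_cons graded_part_notin // addr0; case: asboolP.
rewrite graded_part_cons IHl //; case: asboolP => [hg|]; last by rewrite add0r.
by case: hl; rewrite hg; apply: (List.in_map fst _ _ gvl).
Qed.

Lemma hdecomp_merge (S : V -> Prop) (l : seq (G * V)) :
  S 0 -> (forall x y, S x -> S y -> S (x + y)) ->
  (forall p, List.In p l -> D p.1 p.2 /\ S p.2) ->
  exists l', [/\ hdecomp D (\sum_(p <- l) p.2) l',
    forall p, List.In p l' -> S p.2 & graded_part l' =1 graded_part l].
Proof.
move=> S0 SD; elim: l => [|[g v] l IHl] DSl.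
  by exists [::]; split => //; split; [constructor | split].
have [|l' [[nd [Dl' sum_l']] Sl' part_l']] := IHl.
  by move=> p pl; apply: DSl; right.
have [Dv Sv] := DSl _ (or_introl erefl).
pose other := fun p : G * V => ~~ `[< p.1 = g >].
exists ((g, v + graded_part l' g) :: filter other l'); split.
- split; [constructor; last exact: NoDup_map_filter|split].
  + by move=> /List.in_map_iff [p [pg /List.filter_In [_ /asboolPn]]]; apply.
  + move=> p /= [<-|/List.filter_In [pl _]]; last exact: Dl'.
    by apply: dsumD => //; apply: graded_part_homogeneous => q /Dl'.
  + rewrite !big_cons sum_l' -addrA /graded_part /= big_filter.
    by rewrite [in LHS](bigID (fun p => `[< p.1 = g >])).
- move=> p /= [<-|/List.filter_In [pl _]]; last exact: Sl'.
  by apply: (SD _ _ Sv); apply: (big_ind_In S0 SD) => q ql _; apply: Sl'.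
move=> h; rewrite !graded_part_cons -part_l' /graded_part big_filter_cond /=.
case: (asboolP (g = h)) => [<-|gh].
  by rewrite [X in _ + X = _]big1 ?addr0 // => p /andP [/asboolPn np /asboolP /np].
rewrite !add0r; apply: eq_bigl => p; rewrite /other.
by case: (asboolP (p.1 = h)) => [->|]; [case: asboolP => // /esym /gh | rewrite andbF].
Qed.

Lemma graded_part_uniq l1 l2 :
  (forall p, List.In p l1 -> D p.1 p.2) -> (forall p, List.In p l2 -> D p.1 p.2) ->
  \sum_(p <- l1) p.2 = \sum_(p <- l2) p.2 -> graded_part l1 =1 graded_part l2.
Proof.
move=> Dl1 Dl2 e g.
pose l := l1 ++ [seq (p.1, - p.2) | p <- l2].
have [|l' [[nd [Dl' sum_l']] _ part_l']] :=
    @hdecomp_merge (fun _ => True) l I (fun _ _ _ _ => I).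
  move=> p pl; split => //; case/(List.in_app_or _ _ _): pl => [/Dl1 //|].
  by move=> /List.in_map_iff [q [<- /Dl2]]; apply: dsumN.
have l'0 : forall p, List.In p l' -> p.2 = 0.
  case: HD => _ [_ HU]; apply: HU => //.
  by rewrite -sum_l' big_cat /= big_map sumrN e subrr.
have : graded_part l' g = 0.
  by apply: (big_ind_In (K := eq^~ 0)) => [//|x y -> ->|p /l'0 //]; rewrite addr0.
rewrite part_l' /graded_part big_cat big_map sumrN /=.
by move/eqP; rewrite subr_eq0 => /eqP.
Qed.

Lemma hdecomp_component x l l' g v :
  hdecomp D x l -> List.In (g, v) l ->
  (forall p, List.In p l' -> D p.1 p.2) -> \sum_(p <- l') p.2 = x ->
  graded_part l' g = v.
Proof.
move=> [nd [Dl ->]] gvl Dl' e.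
by rewrite (graded_part_uniq Dl' Dl e); apply: graded_part_NoDup.
Qed.

End DirectSum.

Section Ideals.
Variable R : comPzRingType.
Implicit Types (I J : R -> Prop) (a c r x y : R).

Definition rad I r : Prop := exists n : nat, I (r ^+ n).

Lemma ideal0 I : is_ideal I -> I 0. Proof. by case. Qed.

Lemma idealD I x y : is_ideal I -> I x -> I y -> I (x + y).
Proof. by case=> _ [ID _]; apply: ID. Qed.

Lemma idealMl I r x : is_ideal I -> I x -> I (r * x).
Proof. by case=> _ [_ IM]; apply: IM. Qed.

Lemma idealMr I r x : is_ideal I -> I x -> I (x * r).
Proof. by rewrite mulrC; apply: idealMl. Qed.

Lemma idealMn I x k : is_ideal I -> I x -> I (x *+ k).
Proof.
move=> hI Ix; elim: k => [|k IHk]; first by rewrite mulr0n; apply: ideal0.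
by rewrite mulrS; apply: idealD.
Qed.

Lemma rad_mono I J : I `<=` J -> rad I `<=` rad J.
Proof. by move=> IJ r [n In]; exists n; apply: IJ. Qed.

Lemma rad_exp I c n : rad I (c ^+ n) -> rad I c.
Proof. by move=> [k Ik]; exists (n * k)%N; rewrite exprM. Qed.

Lemma radD I a c : is_ideal I -> rad I a -> rad I c -> rad I (a + c).
Proof.
move=> hI [n Ia] [m Ic]; exists (n + m)%N; rewrite exprDn.
apply: big_ind => [|x y|[i /= _] _]; [exact: ideal0 | exact: idealD |].
apply: idealMn => //; have [lt_im|le_mi] := ltnP i m.
  by rewrite -addnBA ?(ltnW lt_im) // exprD -mulrA; apply: idealMr.
by rewrite -(subnK le_mi) exprD mulrA; apply: idealMl.
Qed.

Lemma ideal_sum_sup (T : Type) (J : T -> R -> Prop) i x : J i x -> ideal_sum J x.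
Proof. by move=> Jx; exists [:: (i, x)]; split => [p [<-|[]]|]; rewrite ?big_seq1. Qed.

Lemma ideal_sum_sub (T : Type) (J : T -> R -> Prop) I :
  is_ideal I -> (forall i, J i `<=` I) -> ideal_sum J `<=` I.
Proof.
move=> hI JI x [l [Jl ->]]; apply: big_ind_In => [|y z|p pl _].
- exact: ideal0.
- exact: idealD.
- exact: JI (Jl p pl).
Qed.

End Ideals.

Section Colon.
Variables (R : comPzRingType) (M : lmodType R).
Implicit Types (K P : M -> Prop) (J : R -> Prop).

Lemma colonMl K r y : colon K y -> colon K (r * y).
Proof. by move=> Ky m; rewrite mulrC -scalerA; apply: Ky. Qed.

Lemma colon_ideal K : is_submod K -> is_ideal (colon K).
Proof.
move=> [K0 [KD _]]; split; [|split].
- by move=> m; rewrite scale0r.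
- by move=> x y Kx Ky m; rewrite scalerDl; apply: KD.
- by move=> r x; apply: colonMl.
Qed.

Lemma colon_mono K P : K `<=` P -> colon K `<=` colon P.
Proof. by move=> KP r Kr m; apply: KP. Qed.

Lemma ideal_mul_modZ J r (m : M) : J r -> ideal_mul_mod J (r *: m).
Proof. by move=> Jr; exists [:: (r, m)]; split => [p [<-|[]]|]; rewrite ?big_seq1. Qed.

Lemma ideal_mul_mod_sub J P : is_submod P -> J `<=` colon P -> ideal_mul_mod J `<=` P.
Proof.
move=> [P0 [PD _]] JP m [l [Jl ->]].
by apply: big_ind_In => // p pl _; apply: (JP _ (Jl p pl)).
Qed.

End Colon.

Section GradedRing.
Variables (G : Grp) (R : comPzRingType) (Rg : G -> R -> Prop).
Hypothesis HR : graded_ring Rg.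
Implicit Types (I J : R -> Prop) (a b c r : R).

Lemma homRM a b : homR Rg a -> homR Rg b -> homR Rg (a * b).
Proof. by move=> [g Ra] [h Rb]; exists (gmul g h); apply: HR.2. Qed.

Lemma homR_exp c n : homR Rg c -> homR Rg (c ^+ n.+1).
Proof.
move=> hc; elim: n => [|n IHn]; first by rewrite expr1.
by rewrite exprS; apply: homRM.
Qed.

Lemma Gr_mono I J : I `<=` J -> Gr Rg I `<=` Gr Rg J.
Proof.
move=> IJ r [l [hl Il]]; exists l; split => // p pl.
by have [n In] := Il p pl; exists n; apply: IJ.
Qed.

Lemma Gr_rad I : is_ideal I -> Gr Rg I `<=` rad I.
Proof.
move=> hI r [l [[_ [_ ->]] Il]]; apply: big_ind_In => [|x y|p pl _].
- by exists 1%N; rewrite expr1; apply: ideal0.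
- exact: radD.
- exact: Il.
Qed.

Lemma Gr_hom I g c : Rg g c -> rad I c -> Gr Rg I c.
Proof. by move=> Rc Ic; exists [:: (g, c)]; split => [|p [<-|[]]]; [apply: hdecomp1|]. Qed.

Lemma Gr_subset_hom I J : is_ideal J ->
  Gr Rg I `<=` Gr Rg J <-> forall c, homR Rg c -> rad I c -> rad J c.
Proof.
move=> hJ; split => [IJ c [g Rc] Ic | IJ r [l [hl Il]]].
  by apply: Gr_rad hJ _ _; apply: IJ; apply: Gr_hom Rc Ic.
exists l; split => // p pl; apply: IJ (Il p pl).
by exists p.1; case: hl => _ [Dl _]; apply: Dl.
Qed.

Lemma graded_prime_rad p c : graded_prime_ideal Rg p -> homR Rg c -> rad p c -> p c.
Proof.
move=> [_ [p1 pM]] hc [[|n]]; first by rewrite expr0.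
elim: n => [|n IHn]; first by rewrite expr1.
by rewrite exprS => /(pM _ _ hc (homR_exp n hc)) [].
Qed.

Lemma graded_ideal_sub I J : graded_ideal Rg I -> is_ideal J ->
  (forall c, homR Rg c -> I c -> J c) -> I `<=` J.
Proof.
move=> [_ Ig] hJ IJ x /Ig [l [[_ [Dl ->]] Il]].
apply: big_ind_In => [|y z|p pl _]; [exact: ideal0 | exact: idealD |].
by apply: IJ (Il p pl); exists p.1; apply: Dl.
Qed.

Definition ideal_adjoin (p : R -> Prop) c : R -> Prop :=
  fun x => exists y s, p y /\ x = y + s * c.

Lemma ideal_adjoin_ideal p c : is_ideal p -> is_ideal (ideal_adjoin p c).
Proof.
move=> hp; split; [|split].
- by exists 0, 0; rewrite mul0r addr0; split => //; apply: ideal0.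
- move=> _ _ [y [s [py ->]]] [y' [s' [py' ->]]]; exists (y + y'), (s + s').
  by split; [apply: idealD | rewrite mulrDl addrACA].
- move=> r _ [y [s [py ->]]]; exists (r * y), (r * s).
  by split; [apply: idealMl | rewrite mulrDr mulrA].
Qed.

Lemma ideal_adjoin_graded p c :
  graded_ideal Rg p -> homR Rg c -> graded_ideal Rg (ideal_adjoin p c).
Proof.
move=> [hp pg] [g Rc]; have hpc := ideal_adjoin_ideal c hp.
split => // _ [y [s [py ->]]].
have [ly [[_ [Dly ->]] ply]] := pg y py.
have [ls [_ [Dls ->]]] := hdecomp_ex HR.1 s.
pose L := ly ++ [seq (gmul q.1 g, q.2 * c) | q <- ls].
have [|l' [hl' pcl' _]] :=
    hdecomp_merge HR.1 (ideal0 hpc) (fun x y => idealD hpc) (l := L).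
  move=> q /(List.in_app_or _ _ _) [ql | /List.in_map_iff [q' [<- ql]]]; split.
  - exact: Dly.
  - by exists q.2, 0; rewrite mul0r addr0; split => //; apply: ply.
  - by apply: HR.2 => //; apply: Dls.
  - by exists 0, q'.2; rewrite add0r; split => //; apply: ideal0.
by exists l'; move: hl'; rewrite big_cat /= big_map -mulr_suml.
Qed.

Section GradedKrull.
Variables (Z : R -> Prop) (b : R).
Hypotheses (hZ : graded_ideal Rg Z) (Zb : ~ rad Z b).

(* Sets are enlarged as [Z `|` A] so that the empty chain, whose union is
   [set0], stays in the family. *)
Let avoiding (A : set R) := graded_ideal Rg (Z `|` A) /\ ~ rad (Z `|` A) b.

Let avoiding_bigcup F :
  F `<=` avoiding -> total_on F subset -> avoiding (\bigcup_(A in F) A).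
Proof.
move=> Favoid Ftot; set U := \bigcup_(A in F) A.
have member B : B = set0 \/ F B -> avoiding B /\ Z `|` B `<=` Z `|` U.
  case=> [-> | FB]; first by rewrite /avoiding setU0; split => [|x]; [split | left].
  by split; [apply: Favoid | move=> x [Zx|Bx]; [left | right; exists B]].
have common x y : (Z `|` U) x -> (Z `|` U) y ->
    exists2 B, B = set0 \/ F B & (Z `|` B) x /\ (Z `|` B) y.
  case=> [Zx|[A FA Ax]] [Zy|[B FB By]].
  - by exists set0; [left | split; left].
  - by exists B; [right | split; [left | right]].
  - by exists A; [right | split; [right | left]].
  - have [AB|BA] := Ftot A B FA FB.
      by exists B; [right | split; right => //; apply: AB].
    by exists A; [right | split; right => //; apply: BA].
split; first split; first split.
- by left; apply: ideal0; case: hZ.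
- split => [x y Ux Uy | r x Ux].
    have [B /member [[[hB _] _] BU] [Bx By]] := common x y Ux Uy.
    by apply: BU; apply: idealD.
  have [B /member [[[hB _] _] BU] [Bx _]] := common x x Ux Ux.
  by apply: BU; apply: idealMl.
- move=> x Ux; have [B /member [[[_ Bg] _] BU] [Bx _]] := common x x Ux Ux.
  by have [l [hl Bl]] := Bg x Bx; exists l; split => // p /Bl /BU.
move=> [n Ubn]; have [B /member [[_ nB] _] [Bbn _]] := common _ _ Ubn Ubn.
by apply: nB; exists n.
Qed.

Let avoiding_maximal_prime A : avoiding A -> (forall B, A `<` B -> ~ avoiding B) ->
  graded_prime_ideal Rg (Z `|` A).
Proof.
move=> [pg pb] Amax; set p := Z `|` A; have hp : is_ideal p by case: pg.
have escape c : homR Rg c -> ~ p c -> rad (ideal_adjoin p c) b.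
  move=> hc pc; apply: contrapT => nb.
  have pB : p `<=` ideal_adjoin p c by move=> x px; exists x, 0; rewrite mul0r addr0.
  apply: (Amax (ideal_adjoin p c)).
    split => [x Ax|BA]; first by apply: pB; right.
    apply: pc; right; apply: BA; exists 0, 1.
    by rewrite mul1r add0r; split => //; apply: ideal0.
  rewrite /avoiding setUidr => [|x Zx]; last by apply: pB; left.
  by split => //; apply: ideal_adjoin_graded.
split => //; split => [p1 | a a' ha ha' paa'].
  by apply: pb; exists 0%N; rewrite expr0.
apply: contrapT => /not_orP [pa pa'].
have [i [y [s [py bi]]]] := escape a ha pa.
have [j [y' [s' [py' bj]]]] := escape a' ha' pa'.
apply: pb; exists (i + j)%N; rewrite exprD bi bj.
have -> : (y + s * a) * (y' + s' * a') =
    y * (y' + s' * a') + s * a * y' + s * s' * (a * a') by ring.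
apply: idealD => //; last exact: idealMl.
by apply: idealD => //; [apply: idealMr | apply: idealMl].
Qed.

Lemma graded_prime_avoid : exists p, [/\ graded_prime_ideal Rg p, Z `<=` p & ~ p b].
Proof.
have [A [avA Amax]] := Zorn_bigcup avoiding_bigcup.
exists (Z `|` A); split; [exact: avoiding_maximal_prime | by move=> x; left |].
by move=> Ab; apply: avA.2; exists 1%N; rewrite expr1.
Qed.

End GradedKrull.

End GradedRing.

Section GradedModule.
Variables (G : Grp) (R : comPzRingType) (M : lmodType R).
Variables (Rg : G -> R -> Prop) (Mg : G -> M -> Prop).
Hypotheses (HR : graded_ring Rg) (HM : graded_module Rg Mg).
Implicit Types (K N P Q : M -> Prop) (a b c r : R).

Lemma homMZ r m : homR Rg r -> homM Mg m -> homM Mg (r *: m).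
Proof. by move=> [g Rr] [h Mm]; exists (gmul g h); apply: HM.2. Qed.

Lemma colon_homP K r : is_submod K -> (forall m, homM Mg m -> K (r *: m)) -> colon K r.
Proof.
move=> [K0 [KD _]] Kr m; have [l [_ [Dl ->]]] := hdecomp_ex HM.1 m.
rewrite scaler_sumr; apply: big_ind_In => // p pl _.
by apply: Kr; exists p.1; apply: Dl.
Qed.

Lemma colon_graded K : graded_submod Mg K -> graded_ideal Rg (colon K).
Proof.
move=> [hK Kg]; split; first exact: colon_ideal.
move=> r Kr; have [l hl] := hdecomp_ex HR.1 r; exists l; split => // -[g c] gcl.
apply: colon_homP => // m [h Mm] /=.
pose L := [seq (gmul q.1 h, q.2 *: m) | q <- l].
have hL : hdecomp Mg (r *: m) L.
  case: hl => [nd [Dl er]]; split; [|split].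
  - have -> : map fst L = map (fun g => gmul g h) (map fst l) by rewrite -!map_comp.
    apply: List.NoDup_map_NoDup_ForallPairs nd.
    by move=> x y _ _; apply: gmulIg.
  - by move=> _ /List.in_map_iff [q [<- ql]]; apply: HM.2 => //; apply: Dl.
  - by rewrite big_map er scaler_suml.
have [lK [[_ [DlK sum_lK]] KlK]] := Kg _ (Kr m).
have gcL := List.in_map (fun q => (gmul q.1 h, q.2 *: m)) _ _ gcl.
rewrite -(hdecomp_component HM.1 hL gcL DlK (esym sum_lK)).
by case: hK => K0 [KD _]; apply: big_ind_In => // p pl _; apply: KlK.
Qed.

Lemma qpSpec_submod Q : qpSpec Rg Mg Q -> is_submod Q.
Proof. by case=> [[[]]]. Qed.

Lemma qpSpec_avoid Q c : qpSpec Rg Mg Q -> ~ rad (colon Q) c ->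
  exists P, [/\ graded_prime_submod Rg Mg P, Q `<=` P,
               graded_prime_ideal Rg (colon P) & ~ colon P c].
Proof.
move=> [[gQ _] Qprimeful] Qc.
have [p [pp Qp pc]] := graded_prime_avoid HR (colon_graded gQ) Qc.
have [P [hP [QP Pp]]] := Qprimeful p pp Qp.
have eP : colon P = p by apply/funext => r; apply/propext.
by exists P; rewrite eP.
Qed.

Lemma qpSpec_rad_prime Q a b : qpSpec Rg Mg Q -> homR Rg a -> homR Rg b ->
  rad (colon Q) (a * b) -> ~ rad (colon Q) a -> rad (colon Q) b.
Proof.
move=> hQ ha hb [[|k] Qab] Qa; first by case: Qa; exists 0%N; rewrite expr0 -(expr0 (a * b)).
apply: contrapT => /(qpSpec_avoid hQ) [P [hP QP Pprime Pb]].
apply/Pb/(graded_prime_rad HR Pprime hb); exists k.+1.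
apply: colon_homP => [|m hm]; first by case: hP => [[]].
have Qm : Q (a ^+ k.+1 *: (b ^+ k.+1 *: m)) by rewrite scalerA -exprMn; apply: Qab.
have [_ [_ Qqp]] := hQ.1.
case: (Qqp _ _ (homR_exp HR k ha) (homMZ (homR_exp HR k hb) hm) Qm) => [GrQa | GrMQ].
  by case: Qa; apply: rad_exp (Gr_rad (colon_ideal (qpSpec_submod hQ)) GrQa).
exact: GrMQ P hP QP.
Qed.

Lemma qpV0 Q : qpV Rg Mg (fun m => m = 0) Q <-> qpSpec Rg Mg Q.
Proof.
split => [[] // | hQ]; split => //; apply: Gr_mono => r r0 m.
by rewrite (r0 m); case: (qpSpec_submod hQ).
Qed.

Lemma qpVT Q : ~ qpV Rg Mg (fun _ => True) Q.
Proof.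
move=> [hQ TQ]; have [l hl] := hdecomp_ex HR.1 1.
have GrT1 : Gr Rg (colon (fun _ : M => True)) 1 by exists l; split => // p _; exists 0%N.
have [k Qk] := Gr_rad (colon_ideal (qpSpec_submod hQ)) (TQ 1 GrT1).
have [m Qm] := hQ.1.2.1; apply: Qm.
by rewrite -(scale1r m) -(expr1n _ k); apply: Qk.
Qed.

Lemma qpV_bigcap (I : Type) (Ks : I -> M -> Prop) :
  (forall i, graded_submod Mg (Ks i)) -> forall Q,
  (qpSpec Rg Mg Q /\ forall i, qpV Rg Mg (Ks i) Q) <->
  qpV Rg Mg (ideal_mul_mod (ideal_sum (fun i => colon (Ks i)))) Q.
Proof.
move=> gKs Q; set J := ideal_sum _; split => [[hQ KsQ] | [hQ JQ]]; last first.
  split => // i; split => //.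
  have KsJ : colon (Ks i) `<=` colon (ideal_mul_mod J : set M).
    move=> r Kr m; apply: ideal_mul_modZ.
    exact: (ideal_sum_sup (J := fun i => colon (Ks i)) Kr).
  by move=> r /(Gr_mono KsJ) /JQ.
have QI := colon_ideal (qpSpec_submod hQ).
split => //; apply/(Gr_subset_hom _ _ QI) => c hc JMc.
apply: contrapT => /(qpSpec_avoid hQ) [P [hP QP Pprime Pc]].
have PI : is_ideal (colon P) by case: Pprime => [[]].
have JP : J `<=` colon P.
  apply: ideal_sum_sub => // i; apply: graded_ideal_sub (colon_graded (gKs i)) PI _.
  move=> z hz Kz; apply/(graded_prime_rad HR Pprime hz)/(rad_mono (colon_mono QP)).
  by apply: ((Gr_subset_hom _ _ QI).1 (KsQ i).2 z hz); exists 1%N; rewrite expr1.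
apply/Pc/(graded_prime_rad HR Pprime hc).
by apply: rad_mono JMc; apply: colon_mono; apply: ideal_mul_mod_sub => //; case: hP => [[]].
Qed.

Lemma rad_colonI N K a b : rad (colon N) a -> rad (colon K) b ->
  rad (colon (fun m => N m /\ K m)) (a * b).
Proof.
move=> [n Na] [k Kb]; exists (n + k)%N => m; split.
  by rewrite exprMn exprD mulrAC -mulrA mulrC; apply: colonMl.
by rewrite exprMn exprD (exprD b) mulrA; apply: colonMl.
Qed.

Lemma qpV_setI N K Q : qpV Rg Mg N Q \/ qpV Rg Mg K Q <-> qpV Rg Mg (fun m => N m /\ K m) Q.
Proof.
split => [[] [hQ XQ] | [hQ NKQ]].
- have NKN : colon (fun m => N m /\ K m) `<=` colon N by move=> r NKr m; case: (NKr m).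
  by split => // r /(Gr_mono NKN) /XQ.
- have NKK : colon (fun m => N m /\ K m) `<=` colon K by move=> r NKr m; case: (NKr m).
  by split => // r /(Gr_mono NKK) /XQ.
have QI := colon_ideal (qpSpec_submod hQ).
have [NQ|/not_andP [//|/(Gr_subset_hom _ _ QI)/existsNP [a]]] := pselect (qpV Rg Mg N Q).
  by left.
move=> /not_implyP [ha /not_implyP [Na Qa]].
right; split => //; apply/(Gr_subset_hom _ _ QI) => b hb Kb.
apply: (qpSpec_rad_prime hQ ha hb _ Qa).
exact: (Gr_subset_hom _ _ QI).1 NKQ _ (homRM HR ha hb) (rad_colonI Na Kb).
Qed.

End GradedModule.

Theorem theorem3p1 (G : Grp) (R : comPzRingType) (M : lmodType R)
  (Rg : G -> R -> Prop) (Mg : G -> M -> Prop)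
  (HR : graded_ring Rg) (HM : graded_module Rg Mg)
  (K N : M -> Prop) (I : Type) (Ks : I -> M -> Prop)
  (hK : graded_submod Mg K) (hN : graded_submod Mg N)
  (hKs : forall i, graded_submod Mg (Ks i)) :
  (* (1) *)
  (forall Q, qpV Rg Mg (fun m : M => m = 0) Q <-> qpSpec Rg Mg Q) /\
  (forall Q, ~ qpV Rg Mg (fun _ : M => True) Q) /\
  (* (2) intersection taken inside qp.Spec_g(M) *)
  (forall Q, (qpSpec Rg Mg Q /\ forall i, qpV Rg Mg (Ks i) Q) <->
             qpV Rg Mg (ideal_mul_mod (ideal_sum (fun i => colon (Ks i)))) Q) /\
  (* (3) *)
  (forall Q, (qpV Rg Mg N Q \/ qpV Rg Mg K Q) <->
             qpV Rg Mg (fun m => N m /\ K m) Q).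
Proof.
split; first exact: qpV0.
split; first exact: qpVT HR.
split; first exact: qpV_bigcap HR HM _ _ hKs.
exact: qpV_setI HR HM N K.
Qed.
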